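(* Let $A$ be a metric space, $\sigma:\mathbb{R}^N\times A\to\mathbb{R}^{N\times m}$, $b:\mathbb{R}^N\times A\to\mathbb{R}^N$ continuous, $a=\sigma\sigma^T$, such that for every $R>0$ there is $K_R$ with $\sup_{|x|\le R,\alpha}(|\sigma|+|b|)\le K_R$, $|\sigma(x,\alpha)-\sigma(y,\alpha)|+|b(x,\alpha)-b(y,\alpha)|\le K_R|x-y|$ for $|x|,|y|\le R$, and $\xi^Ta(x,\alpha)\xi\ge|\xi|^2/K_R$ for all $\xi$, $|x|\le R$, $\alpha$. Let $l:\mathbb{R}^N\times A\to\mathbb{R}$ be continuous, bounded, uniformly continuous in $x$ uniformly in $\alpha$, and let $F(x,p,X)$ be either $\inf_{\alpha}\{-\mathrm{tr}(a(x,\alpha)X)-b(x,\alpha)\cdot p-l(x,\alpha)\}$ or $\sup_\alpha\{-\mathrm{tr}(a(x,\alpha)X)-b(x,\alpha)\cdot p-l(x,\alpha)\}$. Assume that for every $M>0$ there is $R>0$ with $\sup_\alpha\{\mathrm{tr}\,a(x,\alpha)+b(x,\alpha)\cdot x\}\le-M$ for $|x|\ge R$. Let $c\in\mathbb{R}$ and $\chi$ be a viscosity solution of $F(x,D\chi,D^2\chi)=c$ in $\mathbb{R}^N$ with $\lim_{|x|\to\infty}\chi(x)/|x|^2=0$. Suppose moreover there exist $\rho>0$ and $R>0$ such that $$\sup_{\alpha\in A}\{\mathrm{tr}\,a(x,\alpha)+b(x,\alpha)\cdot x\}\le-\frac{2|c|+\|l\|_\infty}{\rho}|x|^{2+\rho}\quad\text{for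 }|x|\ge R.$$ Then for all $|x|\ge R$, $$\min_{|y|\le R}\chi(y)+\frac1{|x|^\rho}-\frac1{R^\rho}\le\chi(x)\le\max_{|y|\le R}\chi(y)-\frac1{|x|^\rho}+\frac1{R^\rho},$$ and in particular $\chi\in L^\infty(\mathbb{R}^N)$.
   Context: Solutions are viscosity solutions; $\|l\|_\infty=\sup_{\mathbb{R}^N\times A}|l|$. (Under these assumptions, such a pair $(c,\chi)$ exists, $c$ is unique, and $\chi$ is unique up to additive constants.) *)

From HB Require Import structures.
From mathcomp Require Import all_boot all_order all_algebra.
From mathcomp Require Import all_classical all_reals all_analysis.
Set Implicit Arguments. Unset Strict Implicit. Unset Printing Implicit Defensive.
Import Order.TTheory GRing.Theory Num.Theory.
Import numFieldNormedType.Exports.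
Local Open Scope classical_set_scope.
Local Open Scope ring_scope.

Section defs.
Variable R : realType.

Definition dotp (N : nat) (u v : 'rV[R]_N) : R := \sum_(i < N) u 0 i * v 0 i.
Definition enorm (N : nat) (u : 'rV[R]_N) : R := Num.sqrt (dotp u u).
Definition fnorm (N m : nat) (M : 'M[R]_(N, m)) : R :=
  Num.sqrt (\sum_(i < N) \sum_(j < m) M i j ^+ 2).
Definition quadf (N : nat) (X : 'M[R]_N) (v : 'rV[R]_N) : R := (v *m X *m v^T) 0 0.

Definition diffm (N m : nat) (A : Type) (sigma : 'rV[R]_N -> A -> 'M[R]_(N, m))
  (x : 'rV[R]_N) (al : A) : 'M[R]_N := sigma x al *m (sigma x al)^T.

Definition Lop (N m : nat) (A : Type) (sigma : 'rV[R]_N -> A -> 'M[R]_(N, m))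
  (b : 'rV[R]_N -> A -> 'rV[R]_N) (l : 'rV[R]_N -> A -> R)
  (x p : 'rV[R]_N) (X : 'M[R]_N) (al : A) : R :=
  - \tr (diffm sigma x al *m X) - dotp (b x al) p - l x al.

Definition Ham (is_inf : bool) (N m : nat) (A : Type)
  (sigma : 'rV[R]_N -> A -> 'M[R]_(N, m)) (b : 'rV[R]_N -> A -> 'rV[R]_N)
  (l : 'rV[R]_N -> A -> R) (x p : 'rV[R]_N) (X : 'M[R]_N) : R :=
  if is_inf then inf [set Lop sigma b l x p X al | al in [set: A]]
  else sup [set Lop sigma b l x p X al | al in [set: A]].

Definition linf (N : nat) (A : Type) (l : 'rV[R]_N -> A -> R) : R :=
  sup [set `|l z.1 z.2| | z in [set: ('rV[R]_N * A)%type]].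

Definition superjet2 (N : nat) (u : 'rV[R]_N -> R) (x p : 'rV[R]_N) (X : 'M[R]_N) : Prop :=
  (X^T = X) /\ forall e : R, 0 < e -> exists d : R, 0 < d /\ forall y : 'rV[R]_N, enorm (y - x) < d ->
    u y <= u x + dotp p (y - x) + 2^-1 * quadf X (y - x) + e * enorm (y - x) ^+ 2.

Definition subjet2 (N : nat) (u : 'rV[R]_N -> R) (x p : 'rV[R]_N) (X : 'M[R]_N) : Prop :=
  (X^T = X) /\ forall e : R, 0 < e -> exists d : R, 0 < d /\ forall y : 'rV[R]_N, enorm (y - x) < d ->
    u y >= u x + dotp p (y - x) + 2^-1 * quadf X (y - x) - e * enorm (y - x) ^+ 2.

Definition visc_solution (N : nat) (F : 'rV[R]_N -> 'rV[R]_N -> 'M[R]_N -> R)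
  (c : R) (u : 'rV[R]_N -> R) : Prop :=
  continuous u /\
  (forall x p X, superjet2 u x p X -> F x p X <= c) /\
  (forall x p X, subjet2 u x p X -> F x p X >= c).
End defs.

From HB Require Import structures.
From mathcomp Require Import all_boot all_order all_algebra.
From mathcomp Require Import all_classical all_reals all_analysis.
From mathcomp Require Import ring lra.
Import Order.TTheory GRing.Theory Num.Theory.
Import numFieldNormedType.Exports.
Local Open Scope classical_set_scope.
Local Open Scope ring_scope.

(* Comparison with the barrier |y|^(-rho).  If chi x > max_{|y| <= R} chi - |x|^(-rho) + R^(-rho)
   at some |x| >= R, then for a small eps the function chi + |y|^(-rho) - eps |y|^2 is maximal on
   {|y| >= R} at a point x1 with |x1| > R: it is too small on the sphere |y| = R and, chi being
   subquadratic, at infinity.  So eps |y|^2 - |y|^(-rho) touches chi from above at x1 and its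
   second-order jet at x1 is a superjet of chi, whence F <= c there by the subsolution property.
   But this jet has the radial form (g x, g I - beta x^T x) with g >= rho |x|^(-rho-2), so the
   drift condition makes -g (tr a + b.x) >= 2|c| + ||l||, and uniform ellipticity makes
   beta x a x^T > 0; hence F > c at x1.
   The lower bound is the upper bound for -chi, which solves the equation with inf and sup
   exchanged and -l, -c in place of l, c; boundedness follows by continuity on the ball. *)

Set Implicit Arguments. Unset Strict Implicit.

Section euclid.
Variables (R : realType) (n : nat).
Implicit Types u v w : 'rV[R]_n.

Lemma dotpC u v : dotp u v = dotp v u.
Proof. by apply: eq_bigr => i _; rewrite mulrC. Qed.

Lemma dotpDl u v w : dotp (u + v) w = dotp u w + dotp v w.
Proof. by rewrite /dotp -big_split; apply: eq_bigr => i _; rewrite mxE mulrDl. Qed.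

Lemma dotpDr u v w : dotp w (u + v) = dotp w u + dotp w v.
Proof. by rewrite dotpC dotpDl !(dotpC w). Qed.

Lemma dotpZl a u v : dotp (a *: u) v = a * dotp u v.
Proof. by rewrite /dotp mulr_sumr; apply: eq_bigr => i _; rewrite mxE mulrA. Qed.

Lemma dotpZr a u v : dotp u (a *: v) = a * dotp u v.
Proof. by rewrite dotpC dotpZl dotpC. Qed.

Lemma dotpNl u v : dotp (- u) v = - dotp u v.
Proof. by rewrite -scaleN1r dotpZl mulN1r. Qed.

Lemma dotpNr u v : dotp u (- v) = - dotp u v.
Proof. by rewrite dotpC dotpNl dotpC. Qed.

Lemma dotp_sqrD u v : dotp (u + v) (u + v) = dotp u u + 2 * dotp u v + dotp v v.
Proof. by rewrite dotpDl !dotpDr (dotpC v u); ring. Qed.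

Lemma dotp_ge0 u : 0 <= dotp u u.
Proof. by apply: sumr_ge0 => i _; rewrite -expr2 sqr_ge0. Qed.

Lemma enorm_ge0 u : 0 <= enorm u.
Proof. exact: sqrtr_ge0. Qed.

Lemma enorm_sqr u : enorm u ^+ 2 = dotp u u.
Proof. by rewrite sqr_sqrtr // dotp_ge0. Qed.

Lemma enorm0 : enorm (0 : 'rV[R]_n) = 0.
Proof. by rewrite /enorm /dotp big1 ?sqrtr0 // => i _; rewrite mxE mul0r. Qed.

Lemma enorm_gt0_dotp u : (0 < enorm u) = (0 < dotp u u).
Proof. exact: sqrtr_gt0. Qed.

Lemma dotp_sqr_le u v : dotp u v ^+ 2 <= dotp u u * dotp v v.
Proof.
have [uu0|uu0] := eqVneq (dotp u u) 0.
  have u0 i : u 0 i = 0.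
    move/eqP: uu0; rewrite psumr_eq0 => [/allP/(_ i (mem_index_enum _))|j _].
      by rewrite implyTb mulf_eq0 orbb => /eqP.
    by rewrite -expr2 sqr_ge0.
  rewrite [dotp u v]/dotp big1 => [|i _]; last by rewrite u0 mul0r.
  by rewrite expr2 mul0r mulr_ge0 ?dotp_ge0.
have uu_gt0 : 0 < dotp u u by rewrite lt_def uu0 dotp_ge0.
(* <t u - v, t u - v> >= 0 at the minimiser t = <u,v>/<u,u> *)
have := dotp_ge0 ((dotp u v / dotp u u) *: u - v).
rewrite -scaleN1r !(dotpDl, dotpDr, dotpZl, dotpZr) (dotpC v u).
set a := dotp u u; set c := dotp u v; set d := dotp v v => H.
rewrite -subr_ge0.
have -> : a * d - c ^+ 2
    = a * (c / a * (c / a * a + -1 * c) + (c / a * (-1 * c) + -1 * (-1 * d))).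
  by field; rewrite gt_eqF.
exact: mulr_ge0 (ltW uu_gt0) H.
Qed.

Lemma normr_dotp_le u v : `|dotp u v| <= enorm u * enorm v.
Proof.
rewrite /enorm -sqrtrM ?dotp_ge0 // -sqrtr_sqr ler_sqrt ?mulr_ge0 ?dotp_ge0 //.
exact: dotp_sqr_le.
Qed.

Lemma enormD u v : enorm (u + v) <= enorm u + enorm v.
Proof.
rewrite -ler_sqr ?nnegrE ?addr_ge0 ?enorm_ge0 //.
rewrite enorm_sqr sqrrD !enorm_sqr dotpDl !dotpDr (dotpC v u).
have := normr_dotp_le u v; have := ler_norm (dotp u v); lra.
Qed.

Lemma enormN u : enorm (- u) = enorm u.
Proof. by rewrite /enorm dotpNl dotpNr opprK. Qed.

Lemma normr_coord_le u i : `|u 0 i| <= enorm u.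
Proof.
rewrite -ler_sqr ?nnegrE ?enorm_ge0 // enorm_sqr real_normK ?num_real //.
rewrite /dotp (bigD1 i) //= -expr2 lerDl.
by apply: sumr_ge0 => j _; rewrite -expr2 sqr_ge0.
Qed.

Lemma dotp_continuous : continuous (fun u : 'rV[R]_n => dotp u u).
Proof.
have -> : (fun u : 'rV[R]_n => dotp u u) =
    \sum_(i < n) (fun u : 'rV[R]_n => u 0 i * u 0 i) by rewrite fct_sumE.
apply: (big_ind (fun f : 'rV[R]_n -> R => continuous f)).
- exact: cst_continuous.
- by move=> f g cf cg x; apply: continuousD; [exact: cf | exact: cg].
- by move=> i _ x; apply: continuousM; exact: coord_continuous.
Qed.

Lemma enorm_continuous : continuous (@enorm R n).
Proof.
move=> x; apply: (continuous_comp (f := fun u : 'rV[R]_n => dotp u u)).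
  exact: dotp_continuous.
exact: sqrt_continuous.
Qed.

Lemma annulus_compact (a b : R) : compact [set u : 'rV[R]_n | a <= enorm u <= b].
Proof.
apply: bounded_closed_compact.
  rewrite /= /bounded_near; near=> M => u /andP[_ ub].
  apply: le_trans (_ : enorm u <= M).
    rewrite [leLHS]/Num.norm /= mx_normrE.
    apply: bigmax_le => [|[i j] _]; first exact: enorm_ge0.
    by rewrite /= (ord1 i); exact: normr_coord_le.
  apply: le_trans ub _; near: M; apply: nbhs_pinfty_ge; exact: num_real.
have -> : [set u : 'rV[R]_n | a <= enorm u <= b] = @enorm R n @^-1` [set` `[a, b]].
  by apply/seteqP; split => u /=; rewrite in_itv.
apply: preimage_closed; last exact: itv_closed.
by move=> u _; exact: enorm_continuous.
Unshelve. all: by end_near.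
Qed.

Lemma continuous_bounded_ball (f : 'rV[R]_n -> R) (r : R) : 0 <= r ->
  continuous f -> exists M, forall u, enorm u <= r -> `|f u| <= M.
Proof.
move=> r0 fc.
have ne : [set u : 'rV[R]_n | 0 <= enorm u <= r] !=set0.
  by exists 0; rewrite /= enorm0 lexx.
have nfc : continuous (fun u => `|f u|).
  by move=> u; apply: continuous_comp (fc u) _; exact: norm_continuous.
have [u0 _ Hmax] := EVT_max_rV ne (@annulus_compact 0 r) (continuous_subspaceT nfc).
by exists `|f u0| => u ur; apply: Hmax; rewrite inE /= enorm_ge0.
Qed.

Lemma bounded_of_bounded_outside_ball (f : 'rV[R]_n -> R) (r lo hi : R) : 0 <= r ->
  continuous f -> (forall u, r <= enorm u -> lo <= f u <= hi) ->
  exists M, forall u, `|f u| <= M.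
Proof.
move=> r0 fc Hout; have [M HM] := continuous_bounded_ball r0 fc.
exists (Num.max M (`|lo| + `|hi|)) => u; rewrite le_max.
have [ur|ur] := leP (enorm u) r; first by rewrite HM.
have /andP[lo_u u_hi] := Hout u (ltW ur).
have := ler_norm hi; have := ler_norm (- lo); rewrite normrN.
have := normr_ge0 lo; have := normr_ge0 hi.
by move=> *; apply/orP; right; rewrite ler_norml; apply/andP; split; lra.
Qed.

Lemma exterior_argmax (f : 'rV[R]_n -> R) (a r : R) (x : 'rV[R]_n) :
  a <= enorm x -> {in [set u | a <= enorm u], continuous f} ->
  (forall u, enorm u = a -> f u < f x) -> (forall u, r <= enorm u -> f u < f x) ->
  exists2 x1, a < enorm x1 & forall u, a <= enorm u -> f u <= f x1.
Proof.
move=> ax fc f_sphere f_far.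
pose K := [set u : 'rV[R]_n | a <= enorm u <= Num.max r (enorm x)].
have xK : x \in K by rewrite inE /K /= ax le_max lexx orbT.
have fcK : {within K, continuous f}.
  apply: continuous_in_subspaceT => u; rewrite inE => /andP[au _].
  by apply: fc; rewrite inE.
have [x1 x1K Hmax] := EVT_max_rV (ex_intro _ x (set_mem xK)) (@annulus_compact a _) fcK.
have fx_le := Hmax x xK.
move: x1K; rewrite inE => /andP[ax1 _].
exists x1.
  rewrite lt_neqAle ax1 andbT; apply/eqP => ex1.
  by have := f_sphere x1 (esym ex1); rewrite ltNge fx_le.
move=> u au; have [ur|ur] := leP (enorm u) (Num.max r (enorm x)).
  by apply: Hmax; rewrite inE /= au.
apply/ltW/lt_le_trans/fx_le/f_far/ltW/le_lt_trans/ur.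
by rewrite le_max lexx.
Qed.

End euclid.

Lemma mulmx_tr_dotp (R : realType) n (u v : 'rV[R]_n) : (u *m v^T) 0 0 = dotp u v.
Proof. by rewrite mxE; apply: eq_bigr => i _; rewrite mxE. Qed.

Section gram.
Variables (R : realType) (N m : nat).
Implicit Types (S : 'M[R]_(N, m)) (v : 'rV[R]_N).

Lemma fnorm_sqr S : fnorm S ^+ 2 = \sum_(i < N) \sum_(j < m) S i j ^+ 2.
Proof. by rewrite sqr_sqrtr //; do 2 (apply: sumr_ge0 => ? _); exact: sqr_ge0. Qed.

Lemma mxtrace_gram S : \tr (S *m S^T) = fnorm S ^+ 2.
Proof.
rewrite fnorm_sqr; apply: eq_bigr => i _; rewrite mxE.
by apply: eq_bigr => j _; rewrite mxE expr2.
Qed.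

Lemma quadf_gram S v : quadf (S *m S^T) v = dotp (v *m S) (v *m S).
Proof. by rewrite /quadf !mulmxA -mulmx_tr_dotp trmx_mul -mulmxA. Qed.

Lemma quadf_gram_le S v : quadf (S *m S^T) v <= dotp v v * fnorm S ^+ 2.
Proof.
rewrite quadf_gram fnorm_sqr exchange_big mulr_sumr /dotp; apply: ler_sum => k _.
have := dotp_sqr_le v (row k S^T); rewrite -expr2; congr (_ <= _).
  by congr (_ ^+ 2); rewrite mxE; apply: eq_bigr => i _; rewrite !mxE.
by congr (_ * _); apply: eq_bigr => i _; rewrite !mxE expr2.
Qed.

End gram.

Section radial_mx.
Variables (R : realType) (N : nat).
Implicit Types (x h : 'rV[R]_N).

Definition radial_mx (g be : R) x : 'M[R]_N := g *: 1%:M - be *: (x^T *m x).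

Lemma radial_mx_sym g be x : (radial_mx g be x)^T = radial_mx g be x.
Proof. by rewrite /radial_mx linearB /= !linearZ /= tr_scalar_mx trmx_mul trmxK. Qed.

Lemma quadf_radial_mx g be x h :
  quadf (radial_mx g be x) h = g * dotp h h - be * dotp x h ^+ 2.
Proof.
rewrite /quadf /radial_mx mulmxBr mulmxBl -!scalemxAr -!scalemxAl mulmx1.
have -> : h *m (x^T *m x) *m h^T = (h *m x^T) *m (h *m x^T)^T.
  by rewrite trmx_mul trmxK !mulmxA.
have sum_dotp n (u v : 'rV[R]_n) : \sum_j u 0 j * v^T j 0 = dotp u v.
  by rewrite -mulmx_tr_dotp mxE.
rewrite !mxE !sum_dotp [dotp (h *m x^T) _]/dotp big_ord1 mulmx_tr_dotp.
by rewrite dotpC expr2.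
Qed.

Lemma mxtrace_mul_radial_mx (a : 'M[R]_N) g be x :
  \tr (a *m radial_mx g be x) = g * \tr a - be * quadf a x.
Proof.
rewrite /radial_mx mulmxBr -!scalemxAr mulmx1 linearB /= !mxtraceZ.
by rewrite mulmxA mxtrace_mulC /quadf mulmxA /mxtrace big_ord1.
Qed.

End radial_mx.

Section jets.
Variables (R : realType) (N : nat).
Implicit Types (u v : 'rV[R]_N -> R) (x p : 'rV[R]_N) (X : 'M[R]_N).

Lemma superjet2_cubic u x p X (C d : R) : X^T = X -> 0 <= C -> 0 < d ->
  (forall y, enorm (y - x) < d ->
     u y <= u x + dotp p (y - x) + 2^-1 * quadf X (y - x) + C * enorm (y - x) ^+ 3) ->
  superjet2 u x p X.
Proof.
move=> XT C0 d0 Hu; split=> // e e0.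
exists (Num.min d (e / (C + 1))); split=> [|y].
  by rewrite lt_min d0 divr_gt0 // ltr_wpDl.
rewrite lt_min => /andP[yd ye]; apply: le_trans (Hu y yd) _; rewrite lerD2l.
have h0 := enorm_ge0 (y - x).
have he : enorm (y - x) * (C + 1) < e by rewrite -ltr_pdivlMr // ltr_wpDl.
rewrite exprS mulrA ler_wpM2r ?exprn_ge0 //; lra.
Qed.

Lemma superjet2_touching u v x p X (d : R) : 0 < d ->
  (forall y, enorm (y - x) < d -> u y - u x <= v y - v x) ->
  superjet2 v x p X -> superjet2 u x p X.
Proof.
move=> d0 Huv [XT Hv]; split=> // e e0.
have [d' [d'0 Hd']] := Hv e e0.
exists (Num.min d d'); split=> [|y]; first by rewrite lt_min d0.
by rewrite lt_min => /andP[yd yd']; have := Huv y yd; have := Hd' y yd'; lra.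
Qed.

Lemma quadfN X h : quadf (- X) h = - quadf X h.
Proof. by rewrite /quadf mulmxN mulNmx mxE. Qed.

Lemma superjet2_opp u x p X :
  superjet2 (fun y => - u y) x p X -> subjet2 u x (- p) (- X).
Proof.
move=> [XT Hu]; split=> [|e e0]; first by rewrite linearN /= XT.
have [d [d0 Hd]] := Hu e e0; exists d; split=> // y yd.
by have := Hd y yd; rewrite dotpNl quadfN; lra.
Qed.

End jets.

Lemma powR_continuous (R : realType) (r a : R) : 0 < a ->
  {for a, continuous (fun t : R => t `^ r)}.
Proof.
move=> a0; have : derivable (fun t : R => t `^ r) a 1.
  by apply: derivable_powR; rewrite in_itv /= a0.
by move/derivable1_diffP/differentiable_continuous.
Qed.

Lemma powR_inv_ge_sqr (R : realType) (rho u : R) : 0 <= rho -> 0 < u ->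
  0 <= 1 - rho / 4 * (u ^+ 2 - 1) -> (1 - rho / 4 * (u ^+ 2 - 1)) ^+ 2 <= (u `^ rho)^-1.
Proof.
move=> rho0 u0 t0.
have -> : (u `^ rho)^-1 = expR (- (rho / 4) * ln (u ^+ 2)) ^+ 2.
  rewrite /powR gt_eqF // -expRN -expRM_natl lnXn //.
  by congr expR; rewrite mulr2n; field.
have ln_le : ln (u ^+ 2) <= u ^+ 2 - 1.
  by have := @le_ln1Dx _ (u ^+ 2 - 1); rewrite subrKC; apply; rewrite ltrBrDl subrr exprn_gt0.
rewrite ler_sqr ?nnegrE ?expR_ge0 // (le_trans _ (expR_ge1Dx _)) //.
by rewrite mulNr lerD2l lerN2 ler_wpM2l ?divr_ge0.
Qed.

Section barrier.
Variables (R : realType) (N : nat).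
Implicit Types (x y : 'rV[R]_N).

Definition barrier (rho : R) y : R := (enorm y `^ rho)^-1.
Definition barrier_slope (rho : R) x : R := rho * barrier rho x / dotp x x.
(* Less than the true radial curvature rho (rho + 2) |x|^(-rho-4) of -|y|^(-rho), which is
   harmless for a superjet; this value is what the tangent-line bound of
   [barrier_cubic_bound] delivers. *)
Definition barrier_curv (rho : R) x : R := rho ^+ 2 * barrier rho x / (2 * dotp x x ^+ 2).

Definition test_grad (rho eps : R) x : 'rV[R]_N := (barrier_slope rho x + 2 * eps) *: x.
Definition test_hess (rho eps : R) x : 'M[R]_N :=
  radial_mx (barrier_slope rho x + 2 * eps) (barrier_curv rho x) x.

Lemma barrier_ge0 rho y : 0 <= barrier rho y.
Proof. by rewrite invr_ge0 powR_ge0. Qed.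

Lemma barrier_gt0 rho y : 0 < enorm y -> 0 < barrier rho y.
Proof. by move=> y0; rewrite invr_gt0 powR_gt0. Qed.

Lemma barrier_slope_ge0 rho x : 0 <= rho -> 0 <= barrier_slope rho x.
Proof. by move=> rho0; apply: divr_ge0; rewrite ?mulr_ge0 ?barrier_ge0 ?dotp_ge0. Qed.

Lemma barrier_curv_ge0 rho x : 0 <= barrier_curv rho x.
Proof. by apply: divr_ge0; rewrite mulr_ge0 ?sqr_ge0 ?barrier_ge0. Qed.

Lemma barrier_curv_gt0 rho x : 0 < rho -> 0 < enorm x -> 0 < barrier_curv rho x.
Proof.
move=> rho0 x0; have := x0; rewrite enorm_gt0_dotp => s0.
by apply: divr_gt0; rewrite mulr_gt0 ?exprn_gt0 ?barrier_gt0.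
Qed.

Lemma barrier_continuous rho y : 0 < enorm y -> {for y, continuous (barrier rho)}.
Proof.
move=> y0; apply: continuousV; first by rewrite gt_eqF // powR_gt0.
apply: (continuous_comp (f := @enorm R N) (g := fun t => t `^ rho)).
  exact: enorm_continuous.
exact: powR_continuous.
Qed.

Lemma barrier_le_powR rho r y : 0 <= rho -> 0 < r -> r <= enorm y ->
  barrier rho y <= (r `^ rho)^-1.
Proof.
move=> rho0 r0 ry; rewrite lef_pV2 ?posrE ?powR_gt0 ?(lt_le_trans r0) //.
have r_nneg : r \in Num.nneg by rewrite nnegrE ltW.
have y_nneg : enorm y \in Num.nneg by rewrite nnegrE enorm_ge0.
exact: ge0_ler_powR rho0 _ _ r_nneg y_nneg ry.
Qed.

Lemma barrier_mul_powR rho x : 0 < enorm x ->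
  barrier rho x * enorm x `^ (2 + rho) = dotp x x.
Proof.
move=> x0; rewrite /barrier powRD; last by apply/implyP => _; rewrite gt_eqF.
rewrite mulrCA mulVf ?mulr1 ?gt_eqF ?powR_gt0 //.
by rewrite powR_mulrn ?enorm_ge0 // enorm_sqr.
Qed.

Lemma barrier_cubic_bound rho x : 0 < rho -> 0 < enorm x ->
  exists C d : R, [/\ 0 <= C, 0 < d & forall y, enorm (y - x) < d ->
    - barrier rho y <= - barrier rho x + dotp (barrier_slope rho x *: x) (y - x)
      + 2^-1 * quadf (radial_mx (barrier_slope rho x) (barrier_curv rho x) x) (y - x)
      + C * enorm (y - x) ^+ 3].
Proof.
move=> rho0 x0.
set r0 := enorm x; set s0 := dotp x x; set P := barrier rho x.
have s0E : s0 = r0 ^+ 2 by rewrite enorm_sqr.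
have s0_gt0 : 0 < s0 by rewrite s0E exprn_gt0.
have P0 : 0 < P := barrier_gt0 rho x0.
exists (P * rho ^+ 2 * r0 / (4 * s0 ^+ 2)), (Num.min r0 (s0 / (rho * r0))); split.
- by rewrite divr_ge0 ?mulr_ge0 ?ltW.
- by rewrite lt_min x0 divr_gt0 ?mulr_gt0.
move=> y; set h := y - x; set nh := enorm h; set xh := dotp x h.
rewrite lt_min => /andP[h_r0 h_rho].
have yE : y = x + h by rewrite subrKC.
have hhE : dotp h h = nh ^+ 2 by rewrite enorm_sqr.
have nh0 : 0 <= nh := enorm_ge0 h.
have /andP[xh_ge xh_le] : - (r0 * nh) <= xh <= r0 * nh.
  by rewrite -ler_norml normr_dotp_le.
have yyE : dotp y y = s0 + 2 * xh + nh ^+ 2 by rewrite yE dotp_sqrD hhE.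
have y0 : 0 < enorm y.
  have := enormD y (- h); rewrite enormN -/nh {1}yE addrK -/r0; lra.
pose dl := (2 * xh + nh ^+ 2) / s0.
have rho_dl : rho / 4 * dl <= 1.
  have nh_small : nh * (rho * r0) < s0 by rewrite -ltr_pdivlMr ?mulr_gt0.
  have hh_le : rho * (nh * nh) <= rho * (r0 * nh) by rewrite ler_pM2l // ler_wpM2r // ltW.
  have xh_le' : rho * xh <= rho * (r0 * nh) by rewrite ler_pM2l.
  have : rho * (2 * xh + nh ^+ 2) <= 3 * s0 by rewrite expr2; lra.
  have -> : rho / 4 * dl = rho * (2 * xh + nh ^+ 2) / (4 * s0).
    by rewrite /dl; field; rewrite gt_eqF.
  rewrite ler_pdivrMr ?mulr_gt0 //; lra.
have barrier_y : barrier rho y = P * ((enorm y / r0) `^ rho)^-1.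
  rewrite -invfM -powRM ?enorm_ge0 ?divr_ge0 ?enorm_ge0 //.
  by rewrite mulrC divfK ?gt_eqF.
have ratio_sqr : (enorm y / r0) ^+ 2 - 1 = dl.
  by rewrite expr_div_n !enorm_sqr yyE -/s0 /dl; field; rewrite gt_eqF.
(* the tangent-line bound for t^(-rho/4), squared *)
have lower : P * (1 - rho / 4 * dl) ^+ 2 <= barrier rho y.
  rewrite barrier_y ler_pM2l // -ratio_sqr.
  apply: powR_inv_ge_sqr; [exact: ltW | by rewrite divr_gt0 | by rewrite ratio_sqr subr_ge0].
rewrite dotpZl quadf_radial_mx -/h -/xh hhE /barrier_slope /barrier_curv -/P -/s0.
have E1 : P * (1 - rho / 4 * dl) ^+ 2
    = P - rho * P / s0 * xh - 2^-1 * (rho * P / s0 * nh ^+ 2) + P * rho ^+ 2 / 16 * dl ^+ 2.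
  by rewrite /dl; field; rewrite gt_eqF.
have E2 : P * rho ^+ 2 / 16 * dl ^+ 2 - 2^-1 * (rho ^+ 2 * P / (2 * s0 ^+ 2) * xh ^+ 2)
      + P * rho ^+ 2 * r0 / (4 * s0 ^+ 2) * nh ^+ 3
    = P * rho ^+ 2 / (16 * s0 ^+ 2) * (4 * nh ^+ 2 * (xh + r0 * nh) + nh ^+ 4).
  by rewrite /dl; field; rewrite gt_eqF.
have : 0 <= P * rho ^+ 2 / (16 * s0 ^+ 2) * (4 * nh ^+ 2 * (xh + r0 * nh) + nh ^+ 4).
  have xr : 0 <= xh + r0 * nh by lra.
  apply: mulr_ge0; first by rewrite divr_ge0 ?mulr_ge0 ?exprn_ge0 ?ltW.
  by rewrite addr_ge0 ?mulr_ge0 ?exprn_ge0.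
lra.
Qed.

Lemma test_superjet rho eps x : 0 < rho -> 0 < enorm x ->
  superjet2 (fun y => eps * dotp y y - barrier rho y) x (test_grad rho eps x) (test_hess rho eps x).
Proof.
move=> rho0 x0; have [C [d [C0 d0 Hb]]] := barrier_cubic_bound rho0 x0.
apply: (@superjet2_cubic _ _ _ _ _ _ C d) => // [|y yd]; first exact: radial_mx_sym.
have := Hb y yd; have := dotp_sqrD x (y - x); rewrite subrKC => ->.
rewrite /test_grad /test_hess !dotpZl !quadf_radial_mx; lra.
Qed.

End barrier.

Section hamiltonian.
Variables (R : realType) (N m : nat) (A : Type).
Variables (sigma : 'rV[R]_N -> A -> 'M[R]_(N, m)) (b : 'rV[R]_N -> A -> 'rV[R]_N).
Implicit Types (l : 'rV[R]_N -> A -> R) (x p : 'rV[R]_N) (X : 'M[R]_N).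

Lemma Lop_radial l x g be al :
  Lop sigma b l x (g *: x) (radial_mx g be x) al =
  - g * (\tr (diffm sigma x al) + dotp (b x al) x) + be * quadf (diffm sigma x al) x - l x al.
Proof. by rewrite /Lop mxtrace_mul_radial_mx dotpZr; ring. Qed.

Lemma Ham_ge l is_inf x p X (v : R) : A ->
  (exists M, forall al, Lop sigma b l x p X al <= M) ->
  (forall al, v <= Lop sigma b l x p X al) -> v <= Ham is_inf sigma b l x p X.
Proof.
move=> a0 [M HM] Hv.
have ne : [set Lop sigma b l x p X al | al in [set: A]] !=set0.
  by exists (Lop sigma b l x p X a0), a0.
rewrite /Ham; case: is_inf.
  by apply: lb_le_inf => // _ [al _ <-]; exact: Hv.
apply: le_trans (Hv a0) _; apply: ub_le_sup; last by exists a0.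
by exists M => _ [al _ <-]; exact: HM.
Qed.

Lemma Ham_opp l is_inf x p X :
  Ham (~~ is_inf) sigma b (fun y al => - l y al) x p X = - Ham is_inf sigma b l x (- p) (- X).
Proof.
have E : [set Lop sigma b (fun y al => - l y al) x p X al | al in [set: A]] =
    -%R @` [set Lop sigma b l x (- p) (- X) al | al in [set: A]].
  rewrite image_comp; apply: eq_imagel => al _ /=.
  by rewrite /Lop mulmxN linearN /= dotpNr; ring.
by rewrite /Ham; case: is_inf => /=; rewrite /inf E ?setNK ?opprK.
Qed.

Lemma Lop_radial_le l (Lam K g be : R) x al : 0 <= g -> 0 <= be ->
  fnorm (sigma x al) + enorm (b x al) <= K -> `|l x al| <= Lam ->
  Lop sigma b l x (g *: x) (radial_mx g be x) al
    <= g * (K * enorm x) + be * (dotp x x * K ^+ 2) + Lam.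
Proof.
move=> g0 be0 HK Hl; rewrite Lop_radial.
have f0 : 0 <= fnorm (sigma x al) := sqrtr_ge0 _.
have b0 := enorm_ge0 (b x al).
have fK : fnorm (sigma x al) <= K by lra.
have bx : - dotp (b x al) x <= K * enorm x.
  have := ler_norm (- dotp (b x al) x); rewrite normrN => Hn.
  apply: le_trans Hn (le_trans (normr_dotp_le _ _) _).
  by rewrite ler_wpM2r ?enorm_ge0 //; lra.
have tr0 : 0 <= \tr (diffm sigma x al) by rewrite mxtrace_gram sqr_ge0.
have q_le : quadf (diffm sigma x al) x <= dotp x x * K ^+ 2.
  apply: le_trans (quadf_gram_le _ _) _.
  by rewrite ler_wpM2l ?dotp_ge0 // ler_sqr ?nnegrE //; lra.
have h1 : - g * (\tr (diffm sigma x al) + dotp (b x al) x) <= g * (K * enorm x).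
  by rewrite mulNr -mulrN ler_wpM2l //; lra.
have h2 : be * quadf (diffm sigma x al) x <= be * (dotp x x * K ^+ 2) by rewrite ler_wpM2l.
have := ler_norm (- l x al); rewrite normrN; lra.
Qed.

Lemma Lop_test_ge l (c Lam rho eps K : R) x al :
  0 < rho -> 0 <= eps -> 0 < enorm x ->
  enorm x ^+ 2 / K <= quadf (diffm sigma x al) x -> `|l x al| <= Lam ->
  \tr (diffm sigma x al) + dotp (b x al) x
    <= - ((2 * `|c| + Lam) / rho) * enorm x `^ (2 + rho) ->
  2 * `|c| + barrier_curv rho x * (enorm x ^+ 2 / K)
    <= Lop sigma b l x (test_grad rho eps x) (test_hess rho eps x) al.
Proof.
move=> rho0 eps0 x0 Hell Hl Hdrift; rewrite /test_grad /test_hess Lop_radial.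
set D := _ + _ in Hdrift *; set C := (_ / rho) in Hdrift; set Rp := _ `^ _ in Hdrift.
set sl := barrier_slope rho x; set cv := barrier_curv rho x.
have s0 : 0 < dotp x x by rewrite -enorm_gt0_dotp.
have Lam0 : 0 <= Lam := le_trans (normr_ge0 _) Hl.
have C0 : 0 <= C by apply: divr_ge0; [have := normr_ge0 c; lra | exact: ltW].
have Rp0 : 0 <= Rp := powR_ge0 _ _.
have sl0 : 0 <= sl by apply/barrier_slope_ge0/ltW.
have cv0 : 0 <= cv := barrier_curv_ge0 rho x.
(* |x|^(-rho) * |x|^(2+rho) = |x|^2 makes the slope term absorb exactly 2|c| + Lam *)
have slC : sl * (C * Rp) = 2 * `|c| + Lam.
  have -> : sl * (C * Rp) = barrier rho x * Rp / dotp x x * (2 * `|c| + Lam).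
    by rewrite /sl /C /barrier_slope; field; rewrite !gt_eqF.
  by rewrite barrier_mul_powR // divff ?mul1r ?gt_eqF.
have h1 : (sl + 2 * eps) * (C * Rp) <= - (sl + 2 * eps) * D.
  by rewrite mulNr -mulrN ler_wpM2l; lra.
have h2 : sl * (C * Rp) <= (sl + 2 * eps) * (C * Rp).
  by apply: ler_wpM2r; [exact: mulr_ge0 | lra].
have h3 : cv * (enorm x ^+ 2 / K) <= cv * quadf (diffm sigma x al) x by rewrite ler_wpM2l.
have := ler_norm (l x al); lra.
Qed.

Lemma Ham_test_gt l is_inf (c Lam rho eps K : R) x : A ->
  0 < rho -> 0 <= eps -> 0 < K -> 0 < enorm x ->
  (forall al, fnorm (sigma x al) + enorm (b x al) <= K) ->
  (forall al, enorm x ^+ 2 / K <= quadf (diffm sigma x al) x) ->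
  (forall al, `|l x al| <= Lam) ->
  (forall al, \tr (diffm sigma x al) + dotp (b x al) x
     <= - ((2 * `|c| + Lam) / rho) * enorm x `^ (2 + rho)) ->
  c < Ham is_inf sigma b l x (test_grad rho eps x) (test_hess rho eps x).
Proof.
move=> a0 rho0 eps0 K0 x0 HK Hell Hl Hdrift.
have cv_pos : 0 < barrier_curv rho x * (enorm x ^+ 2 / K).
  by rewrite mulr_gt0 ?barrier_curv_gt0 ?divr_gt0 ?exprn_gt0.
have low al := Lop_test_ge rho0 eps0 x0 (Hell al) (Hl al) (Hdrift al).
apply: lt_le_trans (Ham_ge is_inf a0 _ low).
  by have := ler_norm c; have := normr_ge0 c; lra.
exists ((barrier_slope rho x + 2 * eps) * (K * enorm x)
  + barrier_curv rho x * (dotp x x * K ^+ 2) + Lam) => al.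
apply: Lop_radial_le (HK al) (Hl al); last exact: barrier_curv_ge0.
by apply: addr_ge0; [exact/barrier_slope_ge0/ltW | exact: mulr_ge0].
Qed.

End hamiltonian.

Lemma normr_le_linf (R : realType) N (A : Type) (l : 'rV[R]_N -> A -> R) :
  (exists M, forall x al, `|l x al| <= M) -> forall x al, `|l x al| <= linf l.
Proof.
move=> [M HM] x al; apply: ub_le_sup; last by exists (x, al).
by exists M => _ [z _ <-]; exact: HM.
Qed.

Lemma subquadratic_sub_lt (R : realType) N (u : 'rV[R]_N -> R) (eps M : R) :
  (forall e : R, 0 < e -> exists r : R, forall x, enorm x >= r -> `|u x| <= e * enorm x ^+ 2) ->
  0 < eps -> exists r, forall x, r <= enorm x -> u x - eps * dotp x x < M.
Proof.
move=> u_growth eps0; have [r Hr] := u_growth (eps / 2) (divr_gt0 eps0 (ltr0Sn _ 1)).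
exists (Num.max r (1 + 2 * `|M| / eps)) => x; rewrite ge_max => /andP[rx Mx].
have ux := le_trans (ler_norm _) (Hr x rx).
have M_eps : 0 <= 2 * `|M| / eps by rewrite divr_ge0 ?mulr_ge0 // ltW.
have x_sqr : enorm x <= enorm x ^+ 2 by rewrite expr2 ler_peMl ?enorm_ge0 //; lra.
have : 2 * `|M| < enorm x ^+ 2 * eps.
  by rewrite -ltr_pdivrMr //; lra.
have := ler_norm (- M); rewrite normrN -enorm_sqr; lra.
Qed.

Lemma subsolution_le_barrier (R : realType) N (F : 'rV[R]_N -> 'rV[R]_N -> 'M[R]_N -> R)
  (c rho Rad : R) (chi : 'rV[R]_N -> R) :
  0 < rho -> 0 < Rad -> continuous chi ->
  (forall x p X, superjet2 chi x p X -> F x p X <= c) ->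
  (forall e : R, 0 < e -> exists r : R, forall x, enorm x >= r -> `|chi x| <= e * enorm x ^+ 2) ->
  (forall x eps, Rad < enorm x -> 0 < eps -> c < F x (test_grad rho eps x) (test_hess rho eps x)) ->
  forall x, Rad <= enorm x ->
  chi x <= sup [set chi y | y in [set y | enorm y <= Rad]] - barrier rho x + (Rad `^ rho)^-1.
Proof.
move=> rho0 Rad0 chi_cont chi_sub chi_growth F_gt x xR.
set S := sup _; set GR := (Rad `^ rho)^-1.
have chiS y : enorm y <= Rad -> chi y <= S.
  have [M HM] := continuous_bounded_ball (ltW Rad0) chi_cont.
  move=> yR; apply: ub_le_sup; last by exists y.
  by exists M => _ [z zR <-]; exact: le_trans (ler_norm _) (HM z zR).
have GR_ge (y : 'rV[R]_N) : Rad <= enorm y -> barrier rho y <= GR.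
  exact: barrier_le_powR (ltW rho0) Rad0.
rewrite leNgt; apply/negP => Hlt.
have sx : 0 < dotp x x by rewrite -enorm_gt0_dotp (lt_le_trans Rad0).
set D := chi x + barrier rho x - S - GR.
have D0 : 0 < D by rewrite /D; lra.
set eps := D / (2 * dotp x x).
have eps0 : 0 < eps by rewrite divr_gt0 ?mulr_gt0.
pose Phi y := chi y + barrier rho y - eps * dotp y y.
have PhiX : Phi x = S + GR + D / 2 by rewrite /Phi /eps /D; field; rewrite gt_eqF.
have [r Hr] := subquadratic_sub_lt (S + D / 2) chi_growth eps0.
have [x1 x1R x1_max] : exists2 x1, Rad < enorm x1 & forall y, Rad <= enorm y -> Phi y <= Phi x1.
  apply: (exterior_argmax (r := Num.max r Rad) xR) => [y|y yR|y].
  - rewrite inE => yR.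
    apply: (@continuousB _ _ _ (fun y => chi y + barrier rho y) (fun y => eps * dotp y y)).
      apply: (@continuousD _ _ _ chi (barrier rho)); first exact: chi_cont.
      exact/barrier_continuous/(lt_le_trans Rad0).
    apply: (@continuousM _ _ (fun=> eps) (fun y => dotp y y)); first exact: cst_continuous.
    exact: dotp_continuous.
  - have := chiS y; have := GR_ge y; rewrite yR lexx => /(_ isT) ? /(_ isT) ?.
    by have := mulr_ge0 (ltW eps0) (dotp_ge0 y); rewrite PhiX /Phi; lra.
  - rewrite ge_max => /andP[ry Ry]; have := Hr y ry; have := GR_ge y Ry.
    by rewrite PhiX /Phi; lra.
have x1_0 : 0 < enorm x1 := lt_trans Rad0 x1R.
pose psi (y : 'rV[R]_N) := eps * dotp y y - barrier rho y.
have touch y : enorm (y - x1) < enorm x1 - Rad -> chi y - chi x1 <= psi y - psi x1.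
  move=> yx1; have : Rad <= enorm y.
    by have := enormD y (x1 - y); rewrite subrKC -opprB enormN; lra.
  by move/x1_max; rewrite /Phi /psi; lra.
have gap : 0 < enorm x1 - Rad by rewrite subr_gt0.
have := chi_sub _ _ _ (superjet2_touching (v := psi) gap touch (test_superjet eps rho0 x1_0)).
by have := F_gt x1 eps x1R eps0; lra.
Qed.

Lemma Ham_subsolution_le_barrier (R : realType) (N m : nat) (A : Type) (a0 : A)
  (sigma : 'rV[R]_N -> A -> 'M[R]_(N, m)) (b : 'rV[R]_N -> A -> 'rV[R]_N)
  (l : 'rV[R]_N -> A -> R) (is_inf : bool) (c Lam rho Rad : R) (u : 'rV[R]_N -> R) :
  (forall x, 0 < enorm x -> exists K : R, [/\ 0 < K,
     forall al, fnorm (sigma x al) + enorm (b x al) <= K &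
     forall al, enorm x ^+ 2 / K <= quadf (diffm sigma x al) x]) ->
  (forall x al, `|l x al| <= Lam) ->
  (forall x al, enorm x >= Rad ->
     \tr (diffm sigma x al) + dotp (b x al) x
       <= - ((2 * `|c| + Lam) / rho) * enorm x `^ (2 + rho)) ->
  0 < rho -> 0 < Rad -> continuous u ->
  (forall x p X, superjet2 u x p X -> Ham is_inf sigma b l x p X <= c) ->
  (forall e : R, 0 < e -> exists r : R, forall x, enorm x >= r -> `|u x| <= e * enorm x ^+ 2) ->
  forall x, Rad <= enorm x ->
  u x <= sup [set u y | y in [set y | enorm y <= Rad]] - barrier rho x + (Rad `^ rho)^-1.
Proof.
move=> Hloc Hl Hdrift rho0 Rad0 u_cont u_sub u_growth.
apply: (subsolution_le_barrier (F := Ham is_inf sigma b l) (c := c)) => // x eps xR eps0.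
have x0 : 0 < enorm x := lt_trans Rad0 xR.
have [K [K0 HK Hell]] := Hloc x x0.
apply: (Ham_test_gt is_inf a0 rho0 (ltW eps0) K0 x0 HK Hell (Hl x)) => al.
exact/Hdrift/ltW.
Qed.

Lemma Ham_supersolution_ge_barrier (R : realType) (N m : nat) (A : Type) (a0 : A)
  (sigma : 'rV[R]_N -> A -> 'M[R]_(N, m)) (b : 'rV[R]_N -> A -> 'rV[R]_N)
  (l : 'rV[R]_N -> A -> R) (is_inf : bool) (c Lam rho Rad : R) (u : 'rV[R]_N -> R) :
  (forall x, 0 < enorm x -> exists K : R, [/\ 0 < K,
     forall al, fnorm (sigma x al) + enorm (b x al) <= K &
     forall al, enorm x ^+ 2 / K <= quadf (diffm sigma x al) x]) ->
  (forall x al, `|l x al| <= Lam) ->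
  (forall x al, enorm x >= Rad ->
     \tr (diffm sigma x al) + dotp (b x al) x
       <= - ((2 * `|c| + Lam) / rho) * enorm x `^ (2 + rho)) ->
  0 < rho -> 0 < Rad -> continuous u ->
  (forall x p X, subjet2 u x p X -> Ham is_inf sigma b l x p X >= c) ->
  (forall e : R, 0 < e -> exists r : R, forall x, enorm x >= r -> `|u x| <= e * enorm x ^+ 2) ->
  forall x, Rad <= enorm x ->
  inf [set u y | y in [set y | enorm y <= Rad]] + barrier rho x - (Rad `^ rho)^-1 <= u x.
Proof.
move=> Hloc Hl Hdrift rho0 Rad0 u_cont u_super u_growth.
set B := [set y : 'rV[R]_N | enorm y <= Rad].
have opp_le x : Rad <= enorm x ->
    - u x <= sup [set - u y | y in B] - barrier rho x + (Rad `^ rho)^-1.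
  apply: (Ham_subsolution_le_barrier a0 (l := fun x al => - l x al) (is_inf := ~~ is_inf)
    (c := - c) (Lam := Lam) (u := fun x => - u x) Hloc) => //.
  - by move=> y al; rewrite normrN.
  - by move=> y al; rewrite normrN; exact: Hdrift.
  - by move=> y; apply: continuousN; exact: u_cont.
  - by move=> y p X /superjet2_opp/u_super; rewrite Ham_opp lerN2.
  - move=> e e0; have [r Hr] := u_growth e e0.
    by exists r => y yr; rewrite normrN; exact: Hr.
have supN : sup [set - u y | y in B] = - inf [set u y | y in B].
  by rewrite /inf image_comp opprK.
by move=> x xR; have := opp_le x xR; rewrite supN; lra.
Qed.

Unset Implicit Arguments.
Theorem theorem6p5 (R : realType) (N m : nat) (A : metricType R) (a0 : A)
  (sigma : 'rV[R]_N -> A -> 'M[R]_(N, m)) (b : 'rV[R]_N -> A -> 'rV[R]_N)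
  (l : 'rV[R]_N -> A -> R) (is_inf : bool) (c : R) (chi : 'rV[R]_N -> R)
  (rho Rad : R) :
  (forall i j, continuous (fun z : 'rV[R]_N * A => sigma z.1 z.2 i j)) ->
  (forall i, continuous (fun z : 'rV[R]_N * A => b z.1 z.2 0 i)) ->
  (forall r : R, 0 < r -> exists K : R, 0 < K /\
     (forall x al, enorm x <= r -> fnorm (sigma x al) + enorm (b x al) <= K) /\
     (forall x y al, enorm x <= r -> enorm y <= r ->
        fnorm (sigma x al - sigma y al) + enorm (b x al - b y al) <= K * enorm (x - y)) /\
     (forall (xi : 'rV[R]_N) x al, enorm x <= r ->
        quadf (diffm sigma x al) xi >= enorm xi ^+ 2 / K)) ->
  continuous (fun z : 'rV[R]_N * A => l z.1 z.2) ->
  (exists M : R, forall x al, `|l x al| <= M) ->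
  (forall e : R, 0 < e -> exists d : R, 0 < d /\
     forall x y al, enorm (x - y) < d -> `|l x al - l y al| < e) ->
  (forall M : R, 0 < M -> exists r : R, 0 < r /\
     forall x al, enorm x >= r -> \tr (diffm sigma x al) + dotp (b x al) x <= - M) ->
  visc_solution (Ham is_inf sigma b l) c chi ->
  (forall e : R, 0 < e -> exists r : R, forall x, enorm x >= r ->
     `|chi x| <= e * enorm x ^+ 2) ->
  0 < rho -> 0 < Rad ->
  (forall x al, enorm x >= Rad ->
     \tr (diffm sigma x al) + dotp (b x al) x
       <= - ((2 * `|c| + linf l) / rho) * enorm x `^ (2 + rho)) ->
  (forall x, enorm x >= Rad ->
     inf [set chi y | y in [set y | enorm y <= Rad]]
       + (enorm x `^ rho)^-1 - (Rad `^ rho)^-1 <= chi x /\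
     chi x <= sup [set chi y | y in [set y | enorm y <= Rad]]
       - (enorm x `^ rho)^-1 + (Rad `^ rho)^-1)
  /\ (exists M : R, forall x, `|chi x| <= M).
Proof.
move=> _ _ Hloc _ l_bdd _ _ [chi_cont [chi_sub chi_super]] chi_growth rho0 Rad0 Hdrift.
have Hl := normr_le_linf l_bdd.
have Hloc' x : 0 < enorm x -> exists K : R, [/\ 0 < K,
    forall al, fnorm (sigma x al) + enorm (b x al) <= K &
    forall al, enorm x ^+ 2 / K <= quadf (diffm sigma x al) x].
  by move=> x0; have [K [K0 [HK [_ Hell]]]] := Hloc _ x0; exists K; split=> // al; auto.
have upper := Ham_subsolution_le_barrier a0 Hloc' Hl Hdrift rho0 Rad0 chi_cont chi_sub chi_growth.
have lower :=
  Ham_supersolution_ge_barrier a0 Hloc' Hl Hdrift rho0 Rad0 chi_cont chi_super chi_growth.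
split; first by move=> x xR; split; [exact: lower | exact: upper].
set S := sup _ in upper; set I := inf _ in lower; set GR := (Rad `^ rho)^-1 in upper lower.
apply: (bounded_of_bounded_outside_ball (lo := I - GR) (hi := S + GR) (ltW Rad0) chi_cont).
move=> x xR; have := lower x xR; have := upper x xR; have := barrier_ge0 rho x.
by move=> *; apply/andP; split; lra.
Qed.
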